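(* $M_1$ has exactly two irreducible representations, both one-dimensional: the trivial representation, and the representation $L_\xi$ defined by $a\mapsto1+a'$.
   Context: Work in $\operatorname{Ver}_4^+$, the category of $k[d]/d^2$-modules ($\operatorname{char}k=2$, $k$ algebraically closed, $d$ primitive) with braiding $c(v\otimes w)=w\otimes v+dw\otimes dv$, and $a'=da$. $M_1$ is the affine group scheme sending a commutative algebra $A$ to $A$ with group operation $a*b=a+b+a'b$. Its coordinate ring is $k[X,X']$ with $\Delta(X)=X\otimes1+1\otimes X+X'\otimes X$. *)

From mathcomp Require Import all_boot all_order all_algebra.
Set Implicit Arguments. Unset Strict Implicit. Unset Printing Implicit Defensive.
Import GRing.Theory.
Local Open Scope ring_scope.

(* The coordinate ring O = O(M_1) of M_1, as an object of Ver_4^+.            *)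
(* As a commutative algebra in Ver_4^+ generated by X with d X = X', the      *)
(* commutativity axiom m o c = m forces X'^2 = 0 (c(X(x)X) = X(x)X+X'(x)X'),   *)
(* so O has k-basis X^m, X^m X' (m >= 0).  An element f(X) + g(X) X' is       *)
(* represented by the pair (f, g).                                             *)
Notation O F := ({poly F} * {poly F})%type.
Notation O2 F := ({poly {poly F}} * {poly {poly F}} *
                  ({poly {poly F}} * {poly {poly F}}))%type.

Section M1.
Variable F : fieldType.

(* the action of d on O : d(f + g X') = f'(X) X'  (d derivation, d X' = 0) *)
Definition Od (a : O F) : O F := (0, deriv a.1).

(* counit of O(M_1): X |-> 0, X' |-> 0 (unit of M_1 is a = 0) *)
Definition Oeps (a : O F) : F := a.1.[0].

(* elements of O (x) O.  The underlying vector space is                       *)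
(*   k[X1,X2] (+) k[X1,X2] e1 (+) k[X1,X2] e2 (+) k[X1,X2] e1 e2             *)
(* with X1 = X (x) 1, X2 = 1 (x) X, e1 = X' (x) 1, e2 = 1 (x) X'.           *)
(* A bivariate polynomial is an element of {poly {poly F}}: the outer        *)
(* variable is X1, the inner one is X2.  The quadruple (c00,c10,c01,c11)      *)
(* stands for c00 + c10 e1 + c01 e2 + c11 e1 e2.                              *)
Definition c00 (t : O2 F) := t.1.1.
Definition c10 (t : O2 F) := t.1.2.
Definition c01 (t : O2 F) := t.2.1.
Definition c11 (t : O2 F) := t.2.2.
Definition mkO2 (a b c e : {poly {poly F}}) : O2 F := ((a, b), (c, e)).

Definition inX1 (p : {poly F}) : {poly {poly F}} := map_poly polyC p.
Definition inX2 (p : {poly F}) : {poly {poly F}} := p%:P.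

Definition tens (a b : O F) : O2 F :=
  mkO2 (inX1 a.1 * inX2 b.1) (inX1 a.2 * inX2 b.1)
       (inX1 a.1 * inX2 b.2) (inX1 a.2 * inX2 b.2).

(* Left multiplication by Delta(X) = X(x)1 + 1(x)X + X'(x)X in the algebra   *)
(* O (x) O of Ver_4^+, whose product is (m(x)m)(1(x)c(x)1), i.e.              *)
(*   (a(x)b)(g(x)h) = ag(x)bh + a dg (x) db h.                                *)
(* One computes  Delta(X) * T = (X1 + X2 + e1 X2) T + e1 e2 (d/dX1) T.        *)
Definition mulDX (t : O2 F) : O2 F :=
  let X1 : {poly {poly F}} := 'X in
  let X2 : {poly {poly F}} := ('X)%:P in
  mkO2 ((X1 + X2) * c00 t)
       ((X1 + X2) * c10 t + X2 * c00 t)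
       ((X1 + X2) * c01 t)
       ((X1 + X2) * c11 t + X2 * c01 t + deriv (c00 t)).

Definition O2one : O2 F := mkO2 1 0 0 0.

(* Delta(X^m) = Delta(X)^m *)
Definition DeltaXn (m : nat) : O2 F := iter m mulDX O2one.

(* right multiplication by Delta(X') = e1 + e2 + e1 e2 (= d Delta(X)) ;      *)
(* since d kills every left tensor factor of Delta(X'), this product is the    *)
(* naive one.                                                                 *)
Definition mulDX' (t : O2 F) : O2 F :=
  mkO2 0 (c00 t) (c00 t) (c00 t + c10 t + c01 t).

(* the comultiplication Delta : O -> O (x) O, k-linear, with *)
(* Delta(X^m) = Delta(X)^m and Delta(X^m X') = Delta(X)^m Delta(X').          *)
Definition Delta (a : O F) : O2 F :=
  \sum_(m < size a.1) (a.1`_m)%:P *: DeltaXn m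
  + mulDX' (\sum_(m < size a.2) (a.2`_m)%:P *: DeltaXn m).

(* Finite-dimensional representations of M_1 = O(M_1)-comodules in Ver_4^+.  *)
(* V = F^n with basis e_0..e_(n-1) (column vectors), d acts on V by the       *)
(* matrix D (D e_j = sum_i D i j e_i, D^2 = 0), and the coaction is           *)
(*   rho(e_j) = sum_i e_i (x) T i j,   T i j in O.                            *)
Record rep := Rep {
  rdim : nat;
  rd : 'M[F]_rdim;
  rcoef : 'I_rdim -> 'I_rdim -> O F }.
Arguments rd : clear implicits.
Arguments rcoef : clear implicits.

Definition is_rep (R : rep) : Prop :=
  [/\ rd R *m rd R = 0,
      (* coassociativity: (1 (x) Delta) rho = (rho (x) 1) rho *)
      (forall i j, Delta (rcoef R i j) = \sum_k tens (rcoef R i k) (rcoef R k j)),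
      (* counit: (1 (x) eps) rho = id *)
      (forall i j, Oeps (rcoef R i j) = (i == j)%:R) &
      (* rho is a morphism in Ver_4^+: rho o d = (d (x) 1 + 1 (x) d) o rho *)
      (forall i j, \sum_k rd R k j *: rcoef R i k
                   = \sum_k rd R i k *: rcoef R k j + Od (rcoef R i j))].

(* For v in V, the O-valued coordinates of rho(v) : coordinate i is           *)
(* sum_j v_j T i j.  rho(v) lies in W (x) O iff, for every basis element of O *)
(* (X^m if b = false, X^m X' if b = true), the vector of the corresponding   *)
(* coefficients lies in W.                                                    *)
Definition rho_coef (R : rep) (v : 'cV[F]_(rdim R)) (m : nat) (b : bool)
  : 'cV[F]_(rdim R) :=
  \col_i (let a := \sum_j v j 0 *: rcoef R i j in
          (if b then a.2 else a.1)`_m).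

Arguments rho_coef : clear implicits.

(* subrepresentations: subobjects in Ver_4^+ (d-stable subspaces) that are   *)
(* subcomodules                                                               *)
Definition subrep (R : rep) (W : {vspace 'cV[F]_(rdim R)}) : Prop :=
  (forall v, v \in W -> rd R *m v \in W) /\
  (forall v, v \in W -> forall m b, rho_coef R v m b \in W).

Arguments subrep : clear implicits.

Definition irreducible (R : rep) : Prop :=
  [/\ is_rep R, (0 < rdim R)%N &
      forall W, subrep R W -> W = 0%VS \/ W = fullv].

Definition rep_iso (R1 R2 : rep) : Prop :=
  exists (P : 'M[F]_(rdim R2, rdim R1)) (Q : 'M[F]_(rdim R1, rdim R2)),
    [/\ P *m Q = 1%:M, Q *m P = 1%:M,
        P *m rd R1 = rd R2 *m P &
        forall i j, \sum_k P i k *: rcoef R1 k j = \sum_k P k j *: rcoef R2 i k].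

(* the trivial representation: rho(v) = v (x) 1 *)
Definition triv_rep : rep := @Rep 1 0 (fun _ _ => (1, 0)).

(* L_xi : a |-> 1 + a', i.e. rho(v) = v (x) (1 + X') *)
Definition Lxi_rep : rep := @Rep 1 0 (fun _ _ => (1, 1)).

End M1.

From HB Require Import structures.
From mathcomp Require Import all_boot all_order all_algebra.
Set Implicit Arguments. Unset Strict Implicit. Unset Printing Implicit Defensive.
Import GRing.Theory.
Local Open Scope ring_scope.

(* Write the coaction of a representation as T = f(X) + g(X) X' with f, g
   matrices of polynomials.  Coassociativity makes f a representation of the
   additive group, f(X1 + X2) = f(X1) f(X2), so it has nonzero invariants
   (vectors w with f(X) w = w): any nonzero column of the top coefficient of f.
   On these invariants g(X) acts through its constant term g_0, which preserves
   them and is idempotent there, so some invariant w satisfies g_0 w = c w with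
   c = 0 or 1, i.e. the coaction maps w to w (x) (1 + c X').  Compatibility with
   d shows that d w is again such a vector, and d^2 = 0 yields one killed by d.
   Its line is then a subrepresentation, hence everything when the
   representation is irreducible. *)

Section Coproduct.
Variable F : fieldType.

Definition sumX : {poly {poly F}} := 'X + ('X)%:P.

Lemma coef_sumX_exp m b M :
  ((sumX ^+ m)`_b)`_M = if (b + M)%N == m then 'C(m, b)%:R else 0.
Proof.
elim: m b M => [|m IHm] b M.
  by rewrite expr0 coef1; case: b => [|b]; rewrite ?coef1 ?coef0; case: M.
rewrite exprS mulrDl coefD coefXM coefCM coefD coefXM.
case: b => [|b]; case: M => [|M];
  rewrite ?addnS ?addSn ?add0n ?addn0 /= ?coef0 ?add0r ?addr0 ?IHm ?eqSS //.
- by rewrite add0n !bin0.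
- by rewrite addn0; case: (b =P m) => [->|_]; rewrite ?binn.
- by rewrite addnS addSn; case: eqP => _; rewrite ?addr0 // binS natrD addrC.
Qed.

Lemma sum_coef_sumX_exp (V : lmodType F) (A : nat -> V) N b M :
  (forall m, (N <= m)%N -> A m = 0) ->
  \sum_(m < N) ((sumX ^+ m)`_b)`_M *: A m = 'C(b + M, b)%:R *: A (b + M)%N.
Proof.
move=> A_eq0; under eq_bigr do rewrite coef_sumX_exp.
have [ltMN | leNM] := ltnP (b + M) N; last first.
  rewrite A_eq0 // scaler0 big1 // => m _.
  by case: eqP => [eq_m | _]; rewrite ?scale0r // -eq_m A_eq0 ?scaler0.
rewrite (bigD1 (Ordinal ltMN)) //= eqxx big1 ?addr0 // => m ne_m.
by case: eqP => [eq_m | _]; rewrite ?scale0r //; case/eqP: ne_m; apply: val_inj.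
Qed.

Lemma DeltaXnS m : DeltaXn F m.+1 = mulDX (DeltaXn F m).
Proof. exact: iterS. Qed.

Lemma c00_DeltaXn m : c00 (DeltaXn F m) = sumX ^+ m.
Proof. by elim: m => // m IHm; rewrite DeltaXnS exprS -IHm. Qed.

Lemma c01_DeltaXn m : c01 (DeltaXn F m) = 0.
Proof. by elim: m => // m IHm; rewrite DeltaXnS /c01 /= -/(c01 _) IHm mulr0. Qed.

Lemma coef00_c10_DeltaXn m : ((c10 (DeltaXn F m))`_0)`_0 = 0.
Proof.
case: m => [|m]; first by rewrite !coef0.
by rewrite DeltaXnS /c10 /= mulrDl !coefD !coefCM !coefXM /= coef0 !add0r.
Qed.

Definition Ocomp (x : bool) (a : O F) : {poly F} := if x then a.2 else a.1.

Fact Ocomp_is_linear x : linear (Ocomp x).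
Proof. by case: x. Qed.

HB.instance Definition _ x :=
  GRing.isLinear.Build F (O F) {poly F} *:%R (Ocomp x) (Ocomp_is_linear x).

Definition O2comp (x y : bool) (t : O2 F) : {poly {poly F}} :=
  if x then (if y then c11 t else c10 t) else (if y then c01 t else c00 t).

Definition O2coef (x y : bool) (b M : nat) (t : O2 F) : F := ((O2comp x y t)`_b)`_M.

Fact O2coef_is_zmod_morphism x y b M : zmod_morphism (O2coef x y b M).
Proof. by move=> t t'; rewrite /O2coef; case: x; case: y; rewrite /= !coefB. Qed.

HB.instance Definition _ x y b M :=
  GRing.isZmodMorphism.Build (O2 F) F (O2coef x y b M) (O2coef_is_zmod_morphism x y b M).

Lemma O2coefZ x y b M (c : F) (t : O2 F) :
  O2coef x y b M (c%:P *: t) = c * O2coef x y b M t.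
Proof. by rewrite /O2coef; case: x; case: y; rewrite /= coefZ coefCM. Qed.

Lemma O2coef_tens x y b M (a a' : O F) :
  O2coef x y b M (tens a a') = (Ocomp x a)`_b * (Ocomp y a')`_M.
Proof.
by rewrite /O2coef; case: x; case: y; rewrite /= /inX1 /inX2 coefMC coef_map coefCM.
Qed.

Fact mulDX'_is_linear : linear (@mulDX' F).
Proof.
move=> c t t'; rewrite /mulDX' /mkO2 /c00 /c10 /c01 /=.
congr (_, _, (_, _)) => /=; first by rewrite scaler0 addr0.
by rewrite !scalerDr (addrACA (c *: t.1.1)) (addrACA (c *: t.1.1 + _)).
Qed.

HB.instance Definition _ :=
  GRing.isLinear.Build {poly F} (O2 F) (O2 F) *:%R (@mulDX' F) mulDX'_is_linear.

Lemma DeltaE (a : O F) N : (size a.1 <= N)%N -> (size a.2 <= N)%N ->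
  Delta a = \sum_(m < N) ((a.1`_m)%:P *: DeltaXn F m
                          + (a.2`_m)%:P *: mulDX' (DeltaXn F m)).
Proof.
have widen p (G : nat -> O2 F) : (size p <= N)%N ->
    \sum_(m < size p) (p`_m)%:P *: G m = \sum_(m < N) (p`_m)%:P *: G m.
  move=> le_pN; rewrite (big_ord_widen N (fun m => (p`_m)%:P *: G m) le_pN).
  rewrite big_mkcond; apply: eq_bigr => m _; case: ltnP => // le_p_m.
  by rewrite nth_default // scale0r.
move=> le1 le2; rewrite big_split /Delta widen // widen // linear_sum.
by under [in X in _ + X]eq_bigr do rewrite linearZ.
Qed.

Lemma O2coef_Delta x y b M (a : O F) N : (size a.1 <= N)%N -> (size a.2 <= N)%N ->
  O2coef x y b M (Delta a) = \sum_(m < N) (a.1`_m * O2coef x y b M (DeltaXn F m)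
                                   + a.2`_m * O2coef x y b M (mulDX' (DeltaXn F m))).
Proof.
move=> le1 le2; rewrite (DeltaE le1 le2) raddf_sum.
by apply: eq_bigr => m _; rewrite raddfD /= !O2coefZ.
Qed.

Lemma coef_Ocomp_sum x m I (r : seq I) (P : pred I) (c : I -> F) (G : I -> O F) :
  (Ocomp x (\sum_(i <- r | P i) c i *: G i))`_m =
  \sum_(i <- r | P i) c i * (Ocomp x (G i))`_m.
Proof. by rewrite linear_sum coef_sum; apply: eq_bigr => i _; rewrite linearZ coefZ. Qed.
End Coproduct.

Section Representation.
Variables (F : fieldType) (R : rep F).
Hypothesis R_rep : is_rep R.

Local Notation n := (rdim R).
Local Notation T := (@rcoef F R).

Definition rcoef_mx (x : bool) (m : nat) : 'M[F]_n :=
  \matrix_(i, j) (Ocomp x (T i j))`_m.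

Local Notation fmx := (rcoef_mx false).
Local Notation gmx := (rcoef_mx true).

Lemma rho_coefE v m x : @rho_coef F R v m x = rcoef_mx x m *m v.
Proof.
apply/matrixP => i k; rewrite (ord1 k) !mxE.
rewrite -[let a := _ in _]/((Ocomp x _)`_m) coef_Ocomp_sum.
by apply: eq_bigr => j _; rewrite mxE mulrC.
Qed.

Definition rcoef_size : nat :=
  (\max_i \max_j maxn (size (T i j).1) (size (T i j).2))%N.

Lemma size_rcoef_le x i j : (size (Ocomp x (T i j)) <= rcoef_size)%N.
Proof.
apply: leq_trans (leq_bigmax i); apply: leq_trans (leq_bigmax j).
by case: x; rewrite /= ?leq_maxl ?leq_maxr.
Qed.

Lemma rcoef_mx_eq0 x m : (rcoef_size <= m)%N -> rcoef_mx x m = 0.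
Proof.
move=> le_deg_m; apply/matrixP => i j; rewrite !mxE nth_default //.
exact: leq_trans (size_rcoef_le x i j) le_deg_m.
Qed.

Lemma rcoef_mx0 : fmx 0 = 1%:M.
Proof.
have [_ _ counit _] := R_rep.
by apply/matrixP => i j; rewrite !mxE -horner_coef0; apply: counit.
Qed.

Lemma rcoef_mxM x y b M :
  rcoef_mx x b *m rcoef_mx y M =
  \sum_(m < rcoef_size) (O2coef x y b M (DeltaXn F m) *: fmx m
                   + O2coef x y b M (mulDX' (DeltaXn F m)) *: gmx m).
Proof.
have [_ coassoc _ _] := R_rep.
apply/matrixP => i j; rewrite !mxE summxE.
transitivity (O2coef x y b M (Delta (T i j))).
  rewrite coassoc raddf_sum; apply: eq_bigr => k _.
  by rewrite /= O2coef_tens !mxE.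
rewrite (O2coef_Delta _ _ _ _ (size_rcoef_le false i j) (size_rcoef_le true i j)).
by apply: eq_bigr => m _; rewrite !mxE; congr (_ + _); apply: mulrC.
Qed.

Lemma fmxM b M : fmx b *m fmx M = 'C(b + M, b)%:R *: fmx (b + M)%N.
Proof.
rewrite rcoef_mxM -(sum_coef_sumX_exp _ _ (rcoef_mx_eq0 false)).
by apply: eq_bigr => m _; rewrite /O2coef /= c00_DeltaXn !coef0 scale0r addr0.
Qed.

Lemma fmx_gmxM b M : fmx b *m gmx M = 'C(b + M, b)%:R *: gmx (b + M)%N.
Proof.
rewrite rcoef_mxM -(sum_coef_sumX_exp _ _ (rcoef_mx_eq0 true)).
apply: eq_bigr => m _; rewrite /O2coef /= c01_DeltaXn -c00_DeltaXn.
by rewrite !coef0 scale0r add0r.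
Qed.

Lemma gmx_fmxM M :
  gmx 0 *m fmx M = \sum_(m < rcoef_size) ((c10 (DeltaXn F m))`_0)`_M *: fmx m + gmx M.
Proof.
rewrite rcoef_mxM big_split /=; congr (_ + _).
have := sum_coef_sumX_exp 0 M (rcoef_mx_eq0 true); rewrite add0n bin0 scale1r => <-.
by apply: eq_bigr => m _; rewrite /O2coef /= -c00_DeltaXn.
Qed.

Lemma gmx0_sqr :
  gmx 0 *m gmx 0 = \sum_(m < rcoef_size) ((c11 (DeltaXn F m))`_0)`_0 *: fmx m + gmx 0.
Proof.
rewrite rcoef_mxM big_split /=; congr (_ + _).
have := sum_coef_sumX_exp 0 0 (rcoef_mx_eq0 true); rewrite bin0 scale1r => <-.
apply: eq_bigr => m _; rewrite /O2coef /= -[c11 (mulDX' _)]/(c00 _ + c10 _ + c01 _).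
by rewrite c00_DeltaXn c01_DeltaXn !coefD coef00_c10_DeltaXn !coef0 !addr0.
Qed.

Lemma rcoef_mx_rd x m :
  rcoef_mx x m *m rd R = rd R *m rcoef_mx x m + (if x then m.+1%:R *: fmx m.+1 else 0).
Proof.
have [_ _ _ rd_hom] := R_rep.
apply/matrixP => i j; have := congr1 (fun a => (Ocomp x a)`_m) (rd_hom i j).
rewrite raddfD coefD !coef_Ocomp_sum !mxE => hom_ij.
rewrite (eq_bigr (fun k => rd R k j * (Ocomp x (T i k))`_m)) => [|k _]; last first.
  by rewrite mxE mulrC.
rewrite hom_ij; congr (_ + _); first by apply: eq_bigr => k _; rewrite mxE.
by case: x {hom_ij}; rewrite /= ?coef0 ?mxE // coef_deriv mulr_natl.
Qed.

Definition Ga_invariant (w : 'cV[F]_n) := forall m, (0 < m)%N -> fmx m *m w = 0.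

Lemma sum_fmx_Ga_invariant (c : nat -> F) N w :
  c 0%N = 0 -> Ga_invariant w -> (\sum_(m < N) c m *: fmx m) *m w = 0.
Proof.
move=> c0 w_inv; rewrite mulmx_suml big1 // => -[[|m] _] _ /=.
  by rewrite c0 scale0r mul0mx.
by rewrite -scalemxAl w_inv // scaler0.
Qed.

Lemma gmx_Ga_invariant w M : Ga_invariant w -> (0 < M)%N -> gmx M *m w = 0.
Proof.
move=> w_inv M_gt0; have := congr1 (mulmx^~ w) (gmx_fmxM M).
rewrite -mulmxA w_inv // mulmx0 mulmxDl.
by rewrite (sum_fmx_Ga_invariant (c := fun m => (c10 (DeltaXn F m))`_0`_M)) ?add0r // !coef0.
Qed.

Lemma Ga_invariant_gmx0 w : Ga_invariant w -> Ga_invariant (gmx 0 *m w).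
Proof.
move=> w_inv m m_gt0.
by rewrite mulmxA fmx_gmxM addn0 binn scale1r gmx_Ga_invariant.
Qed.

Lemma gmx0_idem w : Ga_invariant w -> gmx 0 *m (gmx 0 *m w) = gmx 0 *m w.
Proof.
move=> w_inv; rewrite mulmxA gmx0_sqr mulmxDl.
by rewrite (sum_fmx_Ga_invariant (c := fun m => (c11 (DeltaXn F m))`_0`_0)) ?add0r // !coef0.
Qed.

Lemma Ga_invariant_exists : (0 < n)%N -> exists2 w, w != 0 & Ga_invariant w.
Proof.
move=> n_gt0.
have fmx0_neq0 : fmx 0 != 0.
  apply/eqP => /matrixP/(_ (Ordinal n_gt0) (Ordinal n_gt0)).
  by rewrite rcoef_mx0 !mxE eqxx => /eqP; rewrite oner_eq0.
have fmx_bounded m : fmx m != 0 -> (m <= rcoef_size)%N.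
  by apply: contraR; rewrite -ltnNge => /ltnW/rcoef_mx_eq0 ->.
have [top fmx_top_neq0 top_max] := ex_maxnP (ex_intro _ 0%N fmx0_neq0) fmx_bounded.
have [j col_neq0] : exists j, col j (fmx top) != 0.
  apply/existsP; apply: contraR fmx_top_neq0 => /existsPn col_eq0.
  apply/eqP/matrixP => i j; move/eqP/matrixP/(_ i 0): (negbNE (col_eq0 j)).
  by rewrite !mxE.
exists (col j (fmx top)) => // m m_gt0.
have fmx_eq0 : fmx (m + top)%N = 0.
  apply/eqP; apply: contraTT m_gt0 => /top_max.
  by rewrite -{2}[top]add0n leq_add2r leqn0 => /eqP ->.
by rewrite !colE mulmxA fmxM fmx_eq0 scaler0 mul0mx.
Qed.

Definition semi_invariant (w : 'cV[F]_n) (g : O F) :=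
  forall x m, rcoef_mx x m *m w = (Ocomp x g)`_m *: w.

Lemma Ga_invariant_semi_invariant w c :
  Ga_invariant w -> gmx 0 *m w = c *: w -> semi_invariant w (1, c%:P).
Proof.
move=> w_inv gmx0_w [] [|m] /=; rewrite ?coef1 ?coefC //=.
- by rewrite gmx_Ga_invariant // scale0r.
- by rewrite rcoef_mx0 mul1mx scale1r.
- by rewrite w_inv // scale0r.
Qed.

Lemma semi_invariant_rd w g :
  g.1 = 1 -> semi_invariant w g -> semi_invariant (rd R *m w) g.
Proof.
move=> g1 w_si x m; rewrite mulmxA rcoef_mx_rd mulmxDl -mulmxA w_si -scalemxAr.
case: x; last by rewrite mul0mx addr0.
by rewrite -scalemxAl w_si /= g1 coef1 scale0r !scaler0 addr0.
Qed.

Lemma semi_invariant_exists : (0 < n)%N ->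
  exists c w, [/\ c = 0 \/ c = 1, w != 0, rd R *m w = 0 & semi_invariant w (1, c%:P)].
Proof.
move=> n_gt0; have [d2 _ _ _] := R_rep.
have [c [w [c01 w_neq0 w_si]]] :
    exists c w, [/\ c = 0 \/ c = 1, w != 0 & semi_invariant w (1, c%:P)].
  have [w w_neq0 w_inv] := Ga_invariant_exists n_gt0.
  have [gw_eq0 | gw_neq0] := eqVneq (gmx 0 *m w) 0.
    exists 0, w; split; [by left | by [] |].
    by apply: Ga_invariant_semi_invariant; rewrite ?gw_eq0 ?scale0r.
  exists 1, (gmx 0 *m w); split; [by right | by [] |].
  apply: Ga_invariant_semi_invariant; first exact: Ga_invariant_gmx0.
  by rewrite gmx0_idem // scale1r.
have [dw_eq0 | dw_neq0] := eqVneq (rd R *m w) 0; first by exists c, w.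
exists c, (rd R *m w); split => //; last exact: semi_invariant_rd.
by rewrite mulmxA d2 mul0mx.
Qed.

Lemma subrep_semi_invariant w g :
  rd R *m w = 0 -> semi_invariant w g -> subrep <[w]>%VS.
Proof.
move=> dw w_si; split=> v /vlineP [a ->].
  by rewrite -scalemxAr dw scaler0 mem0v.
by move=> m x; rewrite rho_coefE -scalemxAr w_si scalerA memvZ ?memv_line.
Qed.
End Representation.

Section LineRepresentations.
Variable F : fieldType.

Lemma dim_cV_fullv m : \dim (fullv : {vspace 'cV[F]_m}) = m.
Proof. by rewrite dimvf dim_matrix; apply: muln1. Qed.

Definition line_rep (g : O F) : rep F := @Rep F 1 0 (fun _ _ => g).

Lemma Delta_line (c : F) : c * c = c -> Delta (1, c%:P) = tens (1, c%:P) (1, c%:P).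
Proof.
move=> cc; rewrite (@DeltaE _ _ 1) ?size_poly1 ?size_polyC_leq1 // big_ord1 /=.
rewrite coef1 coefC /= scale1r /tens /mkO2 /inX1 /inX2 rmorph1 map_polyC /=.
rewrite polyC1 !mul1r !mulr1.
congr (_, _, (_, _)) => /=; rewrite ?scaler0 ?addr0 ?add0r ?alg_polyC //.
by rewrite -!polyCM cc.
Qed.

Lemma line_rep_irreducible (c : F) : c * c = c -> irreducible (line_rep (1, c%:P)).
Proof.
move=> cc; split=> //; last first.
  move=> W _; have := dimvS (subvf W); rewrite dim_cV_fullv.
  case: (\dim W =P 0%N) => [/eqP | dimW_neq0] dimW_le1; [left | right].
    by apply/eqP; rewrite -dimv_eq0.
  apply/eqP; rewrite eqEdim subvf dim_cV_fullv /=.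
  by case: (\dim W) dimW_neq0 dimW_le1.
split=> /= [|i j|i j|i j]; rewrite ?big_ord1.
- by rewrite mulmx0.
- exact: Delta_line.
- by rewrite (ord1 i) (ord1 j) /Oeps hornerC.
- by rewrite !mxE !scale0r add0r /Od /= -polyC1 derivC.
Qed.

Lemma line_rep_iso_eq g g' : rep_iso (line_rep g) (line_rep g') -> g = g'.
Proof.
move=> [P [Q [PQ _ _ P_coef]]].
have P_neq0 : P 0 0 != 0.
  apply/eqP => P0; move/matrixP/(_ 0 0): PQ.
  by rewrite !mxE big_ord1 P0 mul0r => /esym/eqP; rewrite oner_eq0.
have := P_coef 0 0; rewrite !big_ord1 => /(congr1 ( *:%R (P 0 0)^-1)).
by rewrite !scalerA mulVf // !scale1r.
Qed.

Lemma rep_iso_line_rep (R : rep F) w g : rdim R = 1%N -> w != 0 ->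
  rd R *m w = 0 -> semi_invariant w g -> rep_iso R (line_rep g).
Proof.
case: R w => n D T /= w n1; subst n => w_neq0 dw w_si.
have w00_neq0 : w 0 0 != 0.
  by apply: contraNneq w_neq0 => w0; apply/eqP/matrixP => i j; rewrite !ord1 w0 mxE.
have D0 : D = 0.
  apply/matrixP => i j; rewrite !ord1 mxE.
  move/matrixP/(_ 0 0): dw; rewrite !mxE big_ord1 => /eqP.
  by rewrite mulf_eq0 (negPf w00_neq0) orbF => /eqP.
have coef_T x m : (Ocomp x (T 0 0))`_m = (Ocomp x g)`_m.
  by move/matrixP/(_ 0 0): (w_si x m); rewrite !mxE big_ord1 mxE => /mulIf; apply.
have T_g : T 0 0 = g.
  move: coef_T {w_si}; case: (T 0 0) g => [t1 t2] [g1 g2] coef_T.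
  by congr (_, _); apply/polyP => m; [apply: (coef_T false) | apply: (coef_T true)].
exists 1%:M, 1%:M; split=> //=; rewrite ?mulmx1 ?D0 ?mulmx0 ?mul0mx //.
by move=> i j; rewrite !big_ord1 !ord1 T_g !mxE.
Qed.

Lemma irreducible_line_rep (R : rep F) :
  irreducible R -> exists2 c, c = 0 \/ c = 1 & rep_iso R (line_rep (1, c%:P)).
Proof.
move=> [R_rep n_gt0 R_irr].
have [c [w [c01 w_neq0 dw w_si]]] := semi_invariant_exists R_rep n_gt0.
have [W0 | W_full] := R_irr _ (subrep_semi_invariant dw w_si).
  by move: (memv_line w); rewrite W0 memv0 (negPf w_neq0).
exists c => //; apply: (rep_iso_line_rep _ w_neq0 dw w_si).
by have := dim_vline w; rewrite W_full w_neq0 dim_cV_fullv.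
Qed.
End LineRepresentations.

Theorem mainTheorem17 (k : closedFieldType) (char2 : (2 \in [pchar k])%R) :
  [/\ irreducible (triv_rep k), irreducible (Lxi_rep k),
      ~ rep_iso (triv_rep k) (Lxi_rep k) &
      forall R : rep k, irreducible R ->
        rep_iso R (triv_rep k) \/ rep_iso R (Lxi_rep k)].
Proof.
split.
- by have := line_rep_irreducible (mul0r (0 : k)); rewrite polyC0.
- by have := line_rep_irreducible (mul1r (1 : k)); rewrite polyC1.
- by move/line_rep_iso_eq => [/eqP]; rewrite eq_sym oner_eq0.
- by move=> R /irreducible_line_rep [c [->|->]]; rewrite ?polyC0 ?polyC1; [left | right].
Qed.
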